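(* The map from $\mathcal L_n$ to $\mathcal T_n$ which orders the children of each vertex according to their labels (increasingly) and then removes all labels is a bijection.
   Context: A rooted tree with vertex set $\{0,\dots,n\}$ is naturally labeled if labels increase towards the root and, for each $i$, all children of $i$ have labels smaller than all children of $i+1$; $\mathcal L_n$ is the set of such trees. An ordered rooted tree is an unlabeled rooted tree together with a linear order on the children of each vertex; $\mathcal T_n$ is the set of ordered rooted trees with $n+1$ vertices. *)

From mathcomp Require Import all_boot.
Set Implicit Arguments. Unset Strict Implicit. Unset Printing Implicit Defensive.

Inductive otree := ONode of seq otree.

Fixpoint osize (t : otree) : nat :=
  let: ONode ts := t in (sumn (map osize ts)).+1.

Definition in_T (n : nat) (t : otree) : Prop := osize t = n.+1.

(* A rooted tree on the vertex set {0,...,n} = 'I_n.+1 is given by its root r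
   and its parent map p (with p r = r): every vertex reaches r by following
   parents (n steps suffice). *)
Definition LTree (n : nat) : Type := ('I_n.+1 * {ffun 'I_n.+1 -> 'I_n.+1})%type.

Definition is_rooted_tree n (T : LTree n) : bool :=
  let: (r, p) := T in (p r == r) && [forall v, iter n p v == r].

Definition increasing_to_root n (T : LTree n) : bool :=
  let: (r, p) := T in [forall v, (v != r) ==> (v < p v)].

Definition children_ordered n (T : LTree n) : bool :=
  let: (r, p) := T in
  [forall u, forall v, [&& u != r, v != r & p u < p v] ==> (u < v)].

Definition in_L n (T : LTree n) : bool :=
  [&& is_rooted_tree T, increasing_to_root T & children_ordered T].

Definition children n (T : LTree n) (v : 'I_n.+1) : seq 'I_n.+1 :=
  [seq u <- enum 'I_n.+1 | (u != T.1) && (T.2 u == v)].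

(* the subtree at v, children ordered by labels, labels forgotten;
   [fuel] bounds the depth (n+1 suffices for trees on n+1 vertices) *)
Fixpoint forget_aux n (T : LTree n) (fuel : nat) (v : 'I_n.+1) : otree :=
  match fuel with
  | 0 => ONode [::]
  | f.+1 => ONode (map (forget_aux T f) (children T v))
  end.

Definition forget n (T : LTree n) : otree := forget_aux T n.+1 T.1.

From mathcomp Require Import all_boot zify.
Set Implicit Arguments. Unset Strict Implicit. Unset Printing Implicit Defensive.

(* In a naturally labeled tree on {0,...,n} the root is n and the parent map is
   nondecreasing with i < parent i.  Such a map is determined by its child counts
   c_0, ..., c_n, since parent i < v exactly when i < c_0 + ... + c_(v-1).
   Visit the vertices in increasing order, keeping the queue of the subtrees whose
   root still awaits its parent: by monotonicity the children of v are the first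
   c_v entries of the queue, so v adopts them and joins the end of the queue.
   Forgetting the labels therefore yields the tree that this queue process builds
   from the child counts.  Conversely an ordered tree is built from exactly one
   admissible count sequence, recovered by running the process backwards from the
   newest node, and every admissible sequence is the child count sequence of a
   naturally labeled tree. *)

Definition adopt (c : nat) (Q : seq otree) : seq otree :=
  drop c Q ++ [:: ONode (take c Q)].

Definition assemble (cs : seq nat) (Q : seq otree) : seq otree :=
  foldl (fun Q c => adopt c Q) Q cs.

Fixpoint admissible (cs : seq nat) (Q : seq otree) : bool :=
  if cs is c :: cs' then (c <= size Q) && admissible cs' (adopt c Q) else true.

Definition forest_size (F : seq otree) : nat := sumn (map osize F).

(* [R] lists the queue newest node first; [fuel] bounds the number of nodes *)
Fixpoint disassemble (fuel : nat) (R : seq otree) : seq nat :=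
  match fuel, R with
  | f.+1, ONode ts :: R' => size ts :: disassemble f (R' ++ rev ts)
  | _, _ => [::]
  end.

Lemma assemble_rcons cs c Q : assemble (rcons cs c) Q = adopt c (assemble cs Q).
Proof. by rewrite /assemble foldl_rcons. Qed.

Lemma admissible_rcons cs c Q :
  admissible (rcons cs c) Q = admissible cs Q && (c <= size (assemble cs Q)).
Proof. by elim: cs Q => [|c' cs IH] Q /=; rewrite ?andbT // IH andbA. Qed.

Lemma forest_size_cat F G : forest_size (F ++ G) = forest_size F + forest_size G.
Proof. by rewrite /forest_size map_cat sumn_cat. Qed.

Lemma forest_size_adopt c Q : forest_size (adopt c Q) = (forest_size Q).+1.
Proof.
rewrite /adopt forest_size_cat -{3}(cat_take_drop c Q) forest_size_cat.
by rewrite /forest_size /= addn0 addnC.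
Qed.

Lemma forest_size_assemble cs Q : forest_size (assemble cs Q) = forest_size Q + size cs.
Proof.
elim: cs Q => [|c cs IH] Q; first by rewrite addn0.
by rewrite /= IH forest_size_adopt addSnnS.
Qed.

Lemma size_adopt c Q : c <= size Q -> size (adopt c Q) = size Q - c + 1.
Proof. by move=> le_cQ; rewrite size_cat size_drop. Qed.

Lemma size_assemble cs Q :
  admissible cs Q -> size (assemble cs Q) + sumn cs = size Q + size cs.
Proof.
elim: cs Q => [|c cs IH] Q /=; first by rewrite !addn0.
by case/andP=> le_cQ /IH; rewrite size_adopt //; lia.
Qed.

Lemma admissible_psum cs Q v :
  admissible cs Q -> v < size cs -> sumn (take v.+1 cs) <= size Q + v.
Proof.
elim: cs Q v => [|c cs IH] Q [|v] //= /andP[le_cQ adm_cs] lt_v_cs.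
  by rewrite take0 addn0 addn0.
by have := IH _ v adm_cs lt_v_cs; rewrite size_adopt //; lia.
Qed.

Lemma disassembleP fuel R : forest_size R <= fuel ->
  let cs := rev (disassemble fuel R) in
  [/\ admissible cs [::], assemble cs [::] = rev R & size cs = forest_size R].
Proof.
elim: fuel R => [|f IH] [|[ts] R] //= size_tsR.
have size_cat_ts : forest_size (R ++ rev ts) = forest_size R + forest_size ts.
  by rewrite forest_size_cat /forest_size map_rev sumn_rev.
have size_cons_ts : forest_size (ONode ts :: R) = (forest_size ts).+1 + forest_size R
  by [].
have [|adm asm sz] := IH (R ++ rev ts); first by lia.
rewrite rev_cons admissible_rcons assemble_rcons adm asm rev_cat revK size_cat leq_addr.
split=> //.
- by rewrite /adopt drop_size_cat ?take_size_cat ?size_rev // rev_cons cats1.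
- by rewrite size_rcons sz; lia.
Qed.

Lemma assembleK cs :
  admissible cs [::] -> disassemble (size cs) (rev (assemble cs [::])) = rev cs.
Proof.
elim/last_ind: cs => [|cs c IH] //.
rewrite admissible_rcons => /andP[adm le_c].
rewrite size_rcons assemble_rcons rev_rcons /adopt rev_cat /=.
by rewrite -rev_cat cat_take_drop IH // size_takel.
Qed.

Lemma iota0S k : iota 0 k.+1 = iota 0 k ++ [:: k].
Proof. by rewrite -addn1 iotaD. Qed.

Lemma eq_from_psum (s1 s2 : seq nat) : size s1 = size s2 ->
  (forall v, v <= size s1 -> sumn (take v s1) = sumn (take v s2)) -> s1 = s2.
Proof.
elim: s1 s2 => [|x s1 IH] [|y s2] //= [eq_sz] eq_psum.
have eq_xy : x = y by have := eq_psum 1 isT; rewrite /= !take0 /= !addn0.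
rewrite eq_xy; congr (_ :: _); apply: IH => // v le_v.
by have := eq_psum v.+1 le_v; rewrite /= eq_xy => /addnI.
Qed.

Lemma downclosed_count (P : pred nat) N i :
  (forall j k, j <= k -> k < N -> P k -> P j) -> i < N ->
  P i = (i < count P (iota 0 N)).
Proof.
move=> P_down lt_iN; rewrite -(subnKC lt_iN) iotaD count_cat add0n.
have [Pi | nPi] := boolP (P i).
  rewrite (@eq_in_count _ _ predT) ?count_predT ?size_iota ?leq_addr //.
  by move=> j; rewrite mem_iota ltnS => /andP[_ le_ji]; apply: P_down Pi.
rewrite (@eq_in_count _ _ pred0 (iota i.+1 _)) ?count_pred0 ?addn0; last first.
  move=> k; rewrite mem_iota subnKC // => /andP[lt_ik lt_kN] /=.
  by apply/negbTE; apply: contra nPi; apply: P_down (ltnW lt_ik) lt_kN.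
rewrite iota0S count_cat /= (negbTE nPi) !addn0 ltnNge.
by have := count_size P (iota 0 i); rewrite size_iota => ->.
Qed.

Lemma filter_leq_split (T : eqType) (f : T -> nat) (s : seq T) v :
  sorted leq (map f s) ->
  [seq x <- s | v <= f x] = [seq x <- s | f x == v] ++ [seq x <- s | v < f x].
Proof.
elim: s => [|x s IH] //= sorted_xs.
have sorted_s : sorted leq (map f s) := path_sorted sorted_xs.
have ge_fx : {in s, forall y, f x <= f y}.
  move=> y s_y; have /allP := order_path_min leq_trans sorted_xs.
  by apply; apply: map_f.
case: (ltngtP (f x) v) => [lt_fx_v | lt_v_fx | eq_fx_v]; rewrite /= ?IH //.
rewrite (@eq_in_filter _ (fun y => f y == v) pred0) ?filter_pred0 // => y s_y.
by apply/negbTE/eqP; have := ge_fx y s_y; lia.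
Qed.

Lemma count_ltn_sumn (f : nat -> nat) (s : seq nat) v :
  count (fun x => f x < v) s = sumn [seq count (fun x => f x == w) s | w <- iota 0 v].
Proof.
elim: v => [|v IH]; first by rewrite (@eq_count _ _ pred0) ?count_pred0.
rewrite iota0S map_cat sumn_cat -IH /= addn0 -count_predUI.
rewrite (@eq_count _ (predI _ _) pred0) ?count_pred0 ?addn0.
  by apply: eq_count => x /=; rewrite ltnS leq_eqVlt orbC.
by move=> x /=; case: ltngtP.
Qed.

(* parent maps of naturally labeled trees on [0..n], extended by [A n = n.+1] at the root *)
Definition natural_parent (n : nat) (A : nat -> nat) : Prop :=
  [/\ forall i j, i <= j -> j < n -> A i <= A j,
      forall i, i < n -> i < A i <= n
    & A n = n.+1].

Lemma eq_in_natural_parent n A B : (forall i, i <= n -> A i = B i) ->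
  natural_parent n A -> natural_parent n B.
Proof.
move=> eq_AB [mono bounds An]; split.
- move=> i j le_ij lt_jn; rewrite -!eq_AB ?mono // ltnW //.
  exact: leq_ltn_trans lt_jn.
- by move=> i lt_in; rewrite -eq_AB ?bounds // ltnW.
- by rewrite -eq_AB.
Qed.

Definition child_counts (n : nat) (A : nat -> nat) : seq nat :=
  [seq count (fun i => A i == v) (iota 0 n.+1) | v <- iota 0 n.+1].

Lemma size_child_counts n A : size (child_counts n A) = n.+1.
Proof. by rewrite size_map size_iota. Qed.

Lemma eq_in_child_counts n A B :
  (forall i, i <= n -> A i = B i) -> child_counts n A = child_counts n B.
Proof.
move=> eq_AB; apply: eq_map => v; apply: eq_in_count => i.
by rewrite mem_iota ltnS => /andP[_ /eq_AB /= ->].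
Qed.

Lemma psum_child_counts n A v : v <= n.+1 ->
  sumn (take v (child_counts n A)) = count (fun i => A i < v) (iota 0 n.+1).
Proof. by move=> le_v; rewrite -map_take take_iota (minn_idPl le_v) count_ltn_sumn. Qed.

Section NaturalParent.

Variables (n : nat) (A : nat -> nat).
Hypothesis natA : natural_parent n A.

Lemma natural_parent_gt i : i <= n -> i < A i.
Proof.
case: natA => _ bounds An; rewrite leq_eqVlt => /predU1P[-> | /bounds /andP[] //].
by rewrite An.
Qed.

Lemma natural_parent_le i : i <= n -> A i <= n.+1.
Proof.
case: natA => _ bounds An; rewrite leq_eqVlt => /predU1P[-> | /bounds /andP[_ /leqW] //].
by rewrite An.
Qed.

Lemma natural_parent_mono i j : i <= j -> j <= n -> A i <= A j.
Proof.
case: natA => mono _ An le_ij; rewrite leq_eqVlt => /predU1P[eq_jn | ]; last exact: mono.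
by rewrite eq_jn An natural_parent_le // -eq_jn.
Qed.

(* by monotonicity, the vertices whose parent is below [v] form an initial segment *)
Lemma parent_ltn_psum i v : i <= n -> v <= n.+1 ->
  (A i < v) = (i < sumn (take v (child_counts n A))).
Proof.
move=> le_in le_v; rewrite psum_child_counts //.
apply: (@downclosed_count (fun j => A j < v)) => // j k le_jk lt_kn.
exact/leq_ltn_trans/natural_parent_mono.
Qed.

Definition children_of v := [seq i <- iota 0 v | A i == v].

Definition pending v := [seq i <- iota 0 v | v <= A i].

Lemma pending_split v : v <= n ->
  pending v = children_of v ++ [seq i <- iota 0 v | v < A i].
Proof.
move=> le_vn; apply: filter_leq_split.
apply: (@homo_sorted_in _ _ (fun i => i < v)); last exact: iota_sorted.
  by move=> i j _ /= lt_jv le_ij; apply: natural_parent_mono le_ij _; lia.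
by apply/allP => i; rewrite mem_iota.
Qed.

Lemma pending_succ v : v <= n ->
  pending v.+1 = [seq i <- iota 0 v | v < A i] ++ [:: v].
Proof.
by move=> le_vn; rewrite /pending iota0S filter_cat /= natural_parent_gt.
Qed.

Lemma pending_last : pending n.+1 = [:: n].
Proof.
rewrite /pending iota0S filter_cat /= natural_parent_gt //.
rewrite (@eq_in_filter _ _ pred0) ?filter_pred0 // => i; rewrite mem_iota => /andP[_ lt_in].
by apply/negbTE; rewrite -ltnNge ltnS; case: natA => _ /(_ i lt_in) /andP[].
Qed.

Lemma children_ofE v : v <= n -> children_of v = [seq i <- iota 0 n.+1 | A i == v].
Proof.
move=> le_vn; rewrite -(subnKC (leqW le_vn)) iotaD filter_cat.
rewrite [filter _ (iota (0 + v) _)](@eq_in_filter _ _ pred0) ?filter_pred0 ?cats0 // => i.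
rewrite mem_iota => /andP[le_vi lt_i]; have le_in : i <= n by lia.
by apply/negbTE/eqP => eq_v; have := natural_parent_gt le_in; lia.
Qed.

Lemma size_children_of v : v <= n ->
  size (children_of v) = count (fun i => A i == v) (iota 0 n.+1).
Proof. by move=> le_vn; rewrite children_ofE // size_filter. Qed.

Lemma assemble_child_counts (subtree : nat -> otree) :
  (forall v, v <= n -> subtree v = ONode (map subtree (children_of v))) ->
  admissible (child_counts n A) [::] /\ assemble (child_counts n A) [::] = [:: subtree n].
Proof.
move=> subtreeE.
suff: forall k, k <= n.+1 ->
    admissible (take k (child_counts n A)) [::] /\
    assemble (take k (child_counts n A)) [::] = map subtree (pending k).
  by move/(_ n.+1 (leqnn _)); rewrite take_oversize ?size_child_counts ?pending_last.
elim=> [|k IH] lt_kn //.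
have [adm asm] := IH (ltnW lt_kn).
rewrite (take_nth 0) ?size_child_counts // admissible_rcons assemble_rcons adm asm.
rewrite (nth_map 0) ?size_iota // nth_iota // add0n size_map -size_children_of //.
rewrite pending_split // pending_succ // size_cat leq_addr /adopt map_cat.
by rewrite take_size_cat ?drop_size_cat ?size_map // map_cat -subtreeE.
Qed.

End NaturalParent.

Lemma child_counts_inj n A B : natural_parent n A -> natural_parent n B ->
  child_counts n A = child_counts n B -> forall i, i <= n -> A i = B i.
Proof.
move=> natA natB eq_counts i le_in.
have ltn_AB v : v <= n.+1 -> (A i < v) = (B i < v).
  by move=> le_v; rewrite (parent_ltn_psum natA le_in le_v) eq_counts -parent_ltn_psum.
have le_Bi := natural_parent_le natB le_in.
have le_Ai := natural_parent_le natA le_in.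
apply/eqP; rewrite eqn_leq [A i <= _]leqNgt [B i <= _]leqNgt.
by rewrite (ltn_AB _ le_Bi) -(ltn_AB _ le_Ai) !ltnn.
Qed.

Section ParentOfCounts.

Variables (n : nat) (cs : seq nat).
Hypotheses (size_cs : size cs = n.+1) (sum_cs : sumn cs = n).
Hypothesis psum_cs : forall v, v <= n -> sumn (take v.+1 cs) <= v.

Let psum v := sumn (take v cs).

Lemma psum_mono v w : v <= w -> psum v <= psum w.
Proof. by move=> le_vw; rewrite /psum -(subnKC le_vw) takeD sumn_cat leq_addr. Qed.

Lemma psum_le v : psum v <= n.
Proof. by rewrite /psum -sum_cs -{2}(cat_take_drop v cs) sumn_cat leq_addr. Qed.

(* the least [v] with [i < c_0 + ... + c_v] *)
Definition parent_of_counts i := count (fun v => psum v.+1 <= i) (iota 0 n.+1).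

Lemma parent_of_counts_ltn i v : v <= n.+1 -> (parent_of_counts i < v) = (i < psum v).
Proof.
case: v => [|v] le_v; first by rewrite /psum take0.
rewrite ltnS leqNgt /parent_of_counts -(@downclosed_count (fun w => psum w.+1 <= i)) //.
  by rewrite -ltnNge.
by move=> w w' le_ww' _; apply/leq_trans/psum_mono.
Qed.

Lemma natural_parent_of_counts : natural_parent n parent_of_counts.
Proof.
split.
- by move=> i j le_ij _; apply: sub_count => v /= /leq_trans; apply.
- move=> i lt_in; have le_in := ltnW lt_in; apply/andP; split.
    by rewrite ltnNge -ltnS parent_of_counts_ltn // ltnNge negbK psum_cs.
  by rewrite -ltnS parent_of_counts_ltn // /psum take_oversize ?size_cs // sum_cs.
- rewrite /parent_of_counts (@eq_count _ _ predT) ?count_predT ?size_iota //.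
  by move=> v; apply: psum_le.
Qed.

Lemma child_counts_of_counts : child_counts n parent_of_counts = cs.
Proof.
apply: eq_from_psum; rewrite size_child_counts // => v le_v.
rewrite psum_child_counts // (eq_count (fun i => parent_of_counts_ltn i le_v)).
by rewrite -size_filter (filter_iota_ltn 0 (leqW (psum_le v))) size_iota.
Qed.

End ParentOfCounts.

Section LabeledTrees.

Variable n : nat.

Definition parentn (T : LTree n) (i : nat) : nat :=
  if i < n then val (T.2 (inord i)) else n.+1.

(* [minn] makes the root its own parent *)
Definition tree_of (A : nat -> nat) : LTree n :=
  (ord_max, [ffun u : 'I_n.+1 => inord (minn (A u) n)]).

Lemma inord_max : inord n = ord_max :> 'I_n.+1.
Proof. by apply: val_inj; rewrite /= inordK. Qed.

Lemma ltn_ord_max (u : 'I_n.+1) : (u < n) = (u != ord_max).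
Proof. by rewrite -val_eqE /= ltn_neqAle -ltnS ltn_ord andbT. Qed.

Lemma parentn_ord (T : LTree n) (u : 'I_n.+1) : u < n -> parentn T u = T.2 u.
Proof. by rewrite /parentn => ->; rewrite inord_val. Qed.

Lemma in_L_root (T : LTree n) : in_L T -> T.1 = ord_max /\ T.2 ord_max = ord_max.
Proof.
case: T => r p /and3P[/andP[/eqP p_r _] /forallP incr _] /=.
suff r_max : r = ord_max by rewrite -r_max.
apply/eqP; apply: contraT => r_neq.
by have := incr ord_max; rewrite eq_sym r_neq /= ltnNge -ltnS ltn_ord.
Qed.

Lemma natural_parentn (T : LTree n) : in_L T -> natural_parent n (parentn T).
Proof.
move=> LT; have [r_max _] := in_L_root LT.
case: T r_max LT => r p /= -> /and3P[_ /forallP incr /forallP ord].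
have lt_inord i : i < n -> (inord i : 'I_n.+1) < n by move=> lt_in; rewrite inordK // ltnW.
split.
- move=> i j le_ij lt_jn; have lt_in := leq_ltn_trans le_ij lt_jn.
  rewrite /parentn lt_in lt_jn leqNgt; apply/negP => /= lt_ji.
  have /implyP := forallP (ord (inord j)) (inord i).
  rewrite -!ltn_ord_max (lt_inord j lt_jn) (lt_inord i lt_in) lt_ji => /(_ isT).
  by rewrite !inordK ?(ltnW lt_in) ?(ltnW lt_jn) //; lia.
- move=> i lt_in; rewrite /parentn lt_in -[X in _ && X]ltnS ltn_ord andbT.
  have /implyP := incr (inord i).
  rewrite -ltn_ord_max (lt_inord i lt_in) => /(_ isT).
  by rewrite inordK // ltnW.
- by rewrite /parentn ltnn.
Qed.

Lemma in_L_of_natural (p : {ffun 'I_n.+1 -> 'I_n.+1}) :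
  p ord_max = ord_max -> natural_parent n (parentn (ord_max, p)) -> in_L (ord_max, p).
Proof.
move=> p_max [mono bounds _].
have lt_p (u : 'I_n.+1) : u != ord_max -> u < p u.
  rewrite -ltn_ord_max => lt_un.
  by have /andP[] := bounds u lt_un; rewrite parentn_ord.
apply/and3P; split.
- rewrite /is_rooted_tree p_max eqxx /=; apply/forallP => v; apply/eqP/val_inj.
  have iter_ge k : minn (v + k) n <= iter k p v.
    elim: k => [|k IH]; first by rewrite addn0 geq_minl.
    rewrite iterS; have [-> | neq] := eqVneq (iter k p v) ord_max.
      by rewrite p_max geq_minr.
    by have := lt_p _ neq; lia.
  by apply/eqP; rewrite eqn_leq -ltnS ltn_ord /= -[n in n <= _](minn_idPr (leq_addl v n)).
- by apply/forallP => v; apply/implyP; apply: lt_p.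
- apply/forallP => u; apply/forallP => v; apply/implyP => /and3P[u_neq v_neq].
  rewrite -!ltn_ord_max in u_neq v_neq => lt_puv.
  rewrite ltnNge; apply: contraL lt_puv => le_vu; rewrite -leqNgt.
  by have := mono v u le_vu u_neq; rewrite !parentn_ord.
Qed.

Lemma parentn_inj (T1 T2 : LTree n) : in_L T1 -> in_L T2 ->
  (forall i, i <= n -> parentn T1 i = parentn T2 i) -> T1 = T2.
Proof.
case: T1 T2 => [r1 p1] [r2 p2] /in_L_root[/= -> p1_max] /in_L_root[/= -> p2_max] eq_p.
congr pair; apply/ffunP => u; have [lt_un | ] := boolP (u < n).
  by apply: val_inj; have := eq_p u (ltnW lt_un); rewrite !parentn_ord.
by rewrite ltn_ord_max negbK => /eqP ->; rewrite p1_max p2_max.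
Qed.

Lemma parentn_tree_of A : natural_parent n A ->
  forall i, i <= n -> parentn (tree_of A) i = A i.
Proof.
case=> _ bounds An i; rewrite leq_eqVlt => /predU1P[-> | lt_in].
  by rewrite /parentn ltnn An.
have /andP[_ le_An] := bounds i lt_in.
by rewrite /parentn lt_in ffunE (inordK (ltnW lt_in)) (minn_idPl le_An); apply: inordK.
Qed.

Lemma in_L_tree_of A : natural_parent n A -> in_L (tree_of A).
Proof.
move=> natA; apply: in_L_of_natural.
  by case: natA => _ _ An; rewrite ffunE /= An (minn_idPr (leqnSn n)) inord_max.
exact: eq_in_natural_parent (fun i le_in => esym (parentn_tree_of natA le_in)) natA.
Qed.

Lemma forget_aux_fuel (T : LTree n) : in_L T ->
  forall f g (u : 'I_n.+1), u < f -> u < g -> forget_aux T f u = forget_aux T g u.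
Proof.
case: T => r p /and3P[_ /forallP incr _].
elim=> [|f IH] [|g] u //= lt_uf lt_ug; congr ONode.
apply/eq_in_map => w; rewrite mem_filter => /andP[/andP[w_neq /eqP p_w] _].
by have := incr w; rewrite w_neq p_w /= => lt_wu; apply: IH; apply: leq_trans lt_wu _.
Qed.

Lemma enum_ord_inord : enum 'I_n.+1 = map inord (iota 0 n.+1).
Proof.
apply: (inj_map val_inj); rewrite val_enum_ord -map_comp -[LHS]map_id.
by apply/eq_in_map => i; rewrite mem_iota /= => lt_i; rewrite inordK.
Qed.

Lemma children_parentn (T : LTree n) v : in_L T -> v <= n ->
  children T (inord v) = map inord (children_of (parentn T) v).
Proof.
move=> LT le_vn; have [r_max _] := in_L_root LT.
rewrite /children enum_ord_inord filter_map (children_ofE (natural_parentn LT)) //.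
congr map; apply: eq_in_filter => i; rewrite mem_iota /= r_max => lt_i.
rewrite /parentn -ltn_ord_max inordK //; case: ltnP => [lt_in | le_ni] /=.
  by rewrite -val_eqE /= inordK.
by apply/esym/negbTE; rewrite neq_ltn ltnS le_vn orbT.
Qed.

Definition subtree (T : LTree n) (i : nat) : otree := forget_aux T i.+1 (inord i).

Lemma subtreeE (T : LTree n) : in_L T -> forall v, v <= n ->
  subtree T v = ONode (map (subtree T) (children_of (parentn T) v)).
Proof.
move=> LT v le_vn; rewrite /subtree /= children_parentn // -map_comp; congr ONode.
apply/eq_in_map => i; rewrite mem_filter mem_iota => /andP[_ /andP[_ lt_iv]].
change (forget_aux T v (inord i) = forget_aux T i.+1 (inord i)).
by apply: (forget_aux_fuel LT); rewrite inordK //; lia.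
Qed.

Lemma assemble_forget (T : LTree n) : in_L T ->
  admissible (child_counts n (parentn T)) [::] /\
  assemble (child_counts n (parentn T)) [::] = [:: forget T].
Proof.
move=> LT; have [r_max _] := in_L_root LT.
rewrite /forget r_max -inord_max.
by have := assemble_child_counts (natural_parentn LT) (subtreeE LT).
Qed.

End LabeledTrees.

Lemma forget_in_T n (T : LTree n) : in_L T -> in_T n (forget T).
Proof.
move=> LT; have [_ asm] := assemble_forget LT.
have := forest_size_assemble (child_counts n (parentn T)) [::].
by rewrite asm size_child_counts /forest_size /= addn0.
Qed.

Lemma forget_inj n (T1 T2 : LTree n) : in_L T1 -> in_L T2 -> forget T1 = forget T2 -> T1 = T2.
Proof.
move=> LT1 LT2 eq_forget; apply: (parentn_inj LT1 LT2).
apply: (child_counts_inj (natural_parentn LT1) (natural_parentn LT2)).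
have [adm1 asm1] := assemble_forget LT1; have [adm2 asm2] := assemble_forget LT2.
rewrite -[LHS]revK -(assembleK adm1) -[RHS]revK -(assembleK adm2).
by rewrite asm1 asm2 !size_child_counts eq_forget.
Qed.

Lemma forget_surj n t : in_T n t -> exists2 T : LTree n, in_L T & forget T = t.
Proof.
move=> size_t; have [|adm asm size_cs] := @disassembleP n.+1 [:: t].
  by rewrite /forest_size /= addn0 size_t.
set cs := rev _ in adm asm size_cs.
rewrite /forest_size /= addn0 size_t in size_cs.
have sum_cs : sumn cs = n by have := size_assemble adm; rewrite asm size_cs /=; lia.
have psum_cs v : v <= n -> sumn (take v.+1 cs) <= v.
  by move=> le_vn; have := @admissible_psum _ _ v adm; rewrite size_cs ltnS => /(_ le_vn).
have natA := natural_parent_of_counts size_cs sum_cs psum_cs.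
exists (tree_of n (parent_of_counts n cs)); first exact: in_L_tree_of.
have [_] := assemble_forget (in_L_tree_of natA).
rewrite (eq_in_child_counts (parentn_tree_of natA)).
by rewrite (child_counts_of_counts size_cs sum_cs) asm => -[].
Qed.

Theorem corollary3p8 (n : nat) :
  (forall T : LTree n, in_L T -> in_T n (forget T)) /\
  (forall T1 T2 : LTree n, in_L T1 -> in_L T2 -> forget T1 = forget T2 -> T1 = T2) /\
  (forall t : otree, in_T n t -> exists2 T : LTree n, in_L T & forget T = t).
Proof.
split; [exact: forget_in_T | split; [exact: forget_inj | exact: forget_surj]].
Qed.
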